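(* Let $\mathcal{V},\bar{\mathcal{V}}$ be disjoint finite sets with $|\mathcal{V}|=N$, $|\bar{\mathcal{V}}|=M$, and let $G:2^{\mathcal{V}\cup\bar{\mathcal{V}}}\to\mathbb{R}$ be a submodular, nonnegative set function with $G(\emptyset)=0$ and $G(\mathcal{V}\cup\bar{\mathcal{V}})=0$, with Lovász extension $g(\mathbf{x},\bar{\mathbf{x}})$. Define $F:2^{\mathcal{V}}\to\mathbb{R}$ by $F(\mathcal{S})=\min_{\mathcal{T}\subseteq\bar{\mathcal{V}}}G(\mathcal{S}\cup\mathcal{T})-\min_{\mathcal{T}\subseteq\bar{\mathcal{V}}}G(\mathcal{T})$. Then the Lovász extension $f$ of $F$ satisfies $f(\mathbf{x})=\min_{\bar{\mathbf{x}}\in\mathbb{R}^M}g(\mathbf{x},\bar{\mathbf{x}})$ for all $\mathbf{x}\in\mathbb{R}^N$.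
   Context: Lovász extension: for a set function $F:2^{[n]}\to\mathbb{R}$ with $F(\emptyset)=0$, and $\mathbf{x}\in\mathbb{R}^n$ with entries sorted as $x_{i_1}\ge\cdots\ge x_{i_n}$, $f(\mathbf{x})=\sum_{j=1}^{n-1}F(\{i_1,\dots,i_j\})(x_{i_j}-x_{i_{j+1}})+F([n])x_{i_n}$. In $g(\mathbf{x},\bar{\mathbf{x}})$, $\mathbf{x}\in\mathbb{R}^N$ is indexed by $\mathcal{V}$ and $\bar{\mathbf{x}}\in\mathbb{R}^M$ by $\bar{\mathcal{V}}$. Submodularity: $F(\mathcal{S}_1)+F(\mathcal{S}_2)\ge F(\mathcal{S}_1\cup\mathcal{S}_2)+F(\mathcal{S}_1\cap\mathcal{S}_2)$. *)

From mathcomp Require Import all_boot all_order all_algebra.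
Set Implicit Arguments. Unset Strict Implicit. Unset Printing Implicit Defensive.
Import Order.TTheory GRing.Theory Num.Theory.
Local Open Scope ring_scope.

(* Lovász extension of F : 2^T -> R at x : T -> R.
   s = enumeration of T sorted so that x_{s_0} >= x_{s_1} >= ... >= x_{s_{n-1}};
   f(x) = sum_{j<n} F({s_0,...,s_j}) (x_{s_j} - x_{s_{j+1}}) with x_{s_n} := 0,
   which is exactly sum_{j=1}^{n-1} F(S_j)(x_{i_j}-x_{i_{j+1}}) + F([n]) x_{i_n}. *)
Definition lovasz {R : realDomainType} {T : finType} (F : {set T} -> R)
    (x : T -> R) : R :=
  let s := sort (fun i j => x j <= x i) (enum T) in
  let v := map x s in
  \sum_(j < size s) F [set i in take j.+1 s] * (nth 0 v j - nth 0 v j.+1).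

Definition submodular {R : realDomainType} {T : finType} (F : {set T} -> R) :=
  forall A B : {set T}, F (A :|: B) + F (A :&: B) <= F A + F B.

Definition joinset {V W : finType} (S : {set V}) (T : {set W}) : {set V + W} :=
  (@inl V W @: S) :|: (@inr V W @: T).

Definition joinvec {R : Type} {V W : finType} (x : V -> R) (xb : W -> R)
    : V + W -> R :=
  fun u => match u with inl v => x v | inr w => xb w end.

Definition minT {R : realDomainType} {V W : finType}
    (G : {set V + W} -> R) (S : {set V}) : R :=
  \big[Num.min/G (joinset S set0)]_(T : {set W}) G (joinset S T).

Definition partial_min {R : realDomainType} {V W : finType}
    (G : {set V + W} -> R) (S : {set V}) : R :=
  minT G S - minT G set0.

From mathcomp Require Import all_boot all_order all_algebra.
From mathcomp Require Import zify ring lra.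
Set Implicit Arguments. Unset Strict Implicit. Unset Printing Implicit Defensive.
Import Order.TTheory GRing.Theory Num.Theory.
Local Open Scope ring_scope.

(* Both Lovász extensions are written as sums [\sum_j H {u >= c_j} (c_j - c_(j+1))]
   over superlevel sets, along one common nonincreasing list of thresholds [c]
   (the sorted values of [(x, xbar)]); after Abel summation such a sum does not
   depend on [c] as long as [c] contains every value of [u].  A superlevel set
   of [(x, xbar)] is [S ∪ T] with [S] a superlevel set of [x], so each term for
   [g] dominates the corresponding term for [f] (the last term, whose weight may
   be negative, is [G setT = 0] on both sides).  For equality, submodularity
   makes the minimum-cardinality minimizer of [T |-> G (S ∪ T)] the least one,
   hence monotone in [S]; choosing [xbar_w] as the largest [x_v] for which [w]
   lies in the minimizer selected for [{x >= x_v}] turns the superlevel sets of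
   [xbar] into exactly these minimizers, and every term becomes tight. *)

Section LevelSums.
Variables (R : realDomainType) (T : finType).
Implicit Types (H : {set T} -> R) (u : T -> R) (c s : seq R).

Definition superlevel u (t : R) : {set T} := [set i | t <= u i].

Definition level_sum H u c : R :=
  \sum_(j < size c) H (superlevel u c`_j) * (c`_j - c`_j.+1).

Definition sorted_values u : seq R := map u (sort (fun i j => u j <= u i) (enum T)).

Definition jump_sum H u s : R :=
  \sum_(t <- s) t * (H (superlevel u t) - H [set i | t < u i]).

Lemma sorted_ge_nth c j k :
  sorted >=%R c -> (j <= k)%N -> (k < size c)%N -> c`_k <= c`_j.
Proof.
move=> sc jk kc; apply: (sorted_leq_nth ge_trans ge_refl) => //; rewrite inE /=; lia.
Qed.

Lemma sorted_ge_rcons c b : sorted >=%R (rcons c b) -> {in rcons c b, forall y, b <= y}.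
Proof.
elim: c => [|a c IH] /=; first by move=> _ y; rewrite mem_seq1 => /eqP ->.
rewrite (path_sortedE ge_trans) => /andP[/allP ab sc] y.
by rewrite in_cons => /predU1P[->|]; [apply: ab; rewrite mem_rcons mem_head | exact: IH].
Qed.

Lemma sorted_ge_belast c b : sorted >=%R (rcons c b) -> sorted >=%R c.
Proof. by rewrite -cats1 => /cat_sorted2[]. Qed.

Lemma sorted_values_sorted u : sorted >=%R (sorted_values u).
Proof. by rewrite sorted_map; apply: sort_sorted => i j; exact: le_total. Qed.

Lemma mem_sorted_values u i : u i \in sorted_values u.
Proof. by rewrite map_f // mem_sort mem_enum. Qed.

Lemma lovasz_level_sum_values H u : lovasz H u = level_sum H u (sorted_values u).
Proof.
rewrite /lovasz /level_sum /sorted_values size_map.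
have := sorted_values_sorted u; rewrite /sorted_values.
have s_all i : i \in sort (fun i j => u j <= u i) (enum T) by rewrite mem_sort mem_enum.
move: (sort _ _) s_all => s s_all sc; apply: eq_bigr => -[j /= js] _.
set c := map u s; have jc : (j < size c)%N by rewrite size_map.
have [->|c_jump] := eqVneq c`_j c`_j.+1; first by rewrite subrr !mulr0.
congr (H _ * _); apply/setP => i; rewrite !inE; apply/idP/idP.
  case/(nthP i) => k; rewrite size_takel // ltnS => k_lt <-.
  by rewrite nth_take // -(nth_map _ 0) ?sorted_ge_nth //; exact: leq_ltn_trans k_lt js.
move=> le_ui; apply/negPn/negP => i_notin.
have : i \in take j.+1 s ++ drop j.+1 s by rewrite cat_take_drop.
rewrite mem_cat (negbTE i_notin) => /(nthP i)[k]; rewrite size_drop nth_drop.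
rewrite ltn_subRL => jk ik.
have c_jk : c`_(j.+1 + k) = u i by rewrite /c (nth_map i) ?ik.
have jk' : (j.+1 + k < size c)%N by rewrite size_map.
apply/(negP c_jump)/eqP/le_anti; rewrite (sorted_ge_nth sc (leqnSn j)) ?andbT; last first.
  exact: leq_ltn_trans (leq_addr _ _) jk'.
by rewrite -c_jk in le_ui; exact: le_trans le_ui (sorted_ge_nth sc (leq_addr _ _) jk').
Qed.

Lemma level_sum1 H u b : level_sum H u [:: b] = b * H (superlevel u b).
Proof. by rewrite /level_sum big_ord1 subr0 mulrC. Qed.

Lemma level_sum_rcons2 H u c a b :
  level_sum H u (rcons (rcons c a) b) =
  level_sum H u (rcons c a) + b * (H (superlevel u b) - H (superlevel u a)).
Proof.
rewrite /level_sum !size_rcons !big_ord_recr /=.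
have nth_lt (d : seq R) x n : (n < size d)%N -> (rcons d x)`_n = d`_n.
  by move=> nd; rewrite nth_rcons nd.
have nth_sz (d : seq R) x : (rcons d x)`_(size d) = x by rewrite nth_rcons ltnn eqxx.
have nth_gt (d : seq R) x n : (size d < n)%N -> (rcons d x)`_n = 0.
  by move=> dn; rewrite nth_rcons ltnNge ltnW //= gtn_eqF.
have sz : size (rcons c a) = (size c).+1 by rewrite size_rcons.
rewrite nth_lt ?sz // nth_sz -sz !nth_sz !nth_gt ?sz //.
have -> : \sum_(j < size c) H (superlevel u (rcons (rcons c a) b)`_j) *
      ((rcons (rcons c a) b)`_j - (rcons (rcons c a) b)`_j.+1) =
    \sum_(j < size c) H (superlevel u (rcons c a)`_j) * ((rcons c a)`_j - (rcons c a)`_j.+1).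
  by apply: eq_bigr => -[j /= jc] _; rewrite !(nth_lt (rcons c a)) ?sz ?ltnS // ltnW.
ring.
Qed.

Definition value_closed u c := forall i b, b \in c -> b <= u i -> u i \in c.

Lemma value_closed_belast u c b :
  sorted >=%R (rcons c b) -> value_closed u (rcons c b) -> value_closed u c.
Proof.
move=> sc cl i a ac au.
have : u i \in rcons c b by apply: cl au; rewrite mem_rcons in_cons ac orbT.
rewrite mem_rcons in_cons => /predU1P[ub|//].
suff -> : u i = a by [].
apply/le_anti/andP; split => //; rewrite ub; apply: (sorted_ge_rcons sc).
by rewrite mem_rcons in_cons ac orbT.
Qed.

Lemma strict_superlevel1 u b : value_closed u [:: b] -> [set i | b < u i] = set0.
Proof.
move=> cl; apply/setP => i; rewrite !inE; apply/negP => bu.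
have := cl i b (mem_head _ _) (ltW bu); rewrite mem_seq1 => /eqP ub.
by rewrite ub ltxx in bu.
Qed.

Lemma strict_superlevel_rcons u c a b :
  sorted >=%R (rcons (rcons c a) b) -> value_closed u (rcons (rcons c a) b) -> b < a ->
  [set i | b < u i] = superlevel u a.
Proof.
move=> sc cl ba; apply/setP => i; rewrite !inE.
apply/idP/idP => [bu|]; last exact: lt_le_trans.
have := cl i b; rewrite mem_rcons mem_head => /(_ isT (ltW bu)).
rewrite mem_rcons in_cons => /predU1P[ub|]; first by rewrite ub ltxx in bu.
exact: sorted_ge_rcons (sorted_ge_belast sc) _.
Qed.

Lemma jump_sum_undup_rcons_mem H u s b :
  b \in s -> jump_sum H u (undup (rcons s b)) = jump_sum H u (undup s).
Proof.
move=> bs; apply: perm_big; apply: uniq_perm; rewrite ?undup_uniq // => y.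
by rewrite !mem_undup mem_rcons in_cons; case: eqP => // ->.
Qed.

Lemma jump_sum_undup_rcons H u s b : b \notin s ->
  jump_sum H u (undup (rcons s b)) =
  jump_sum H u (undup s) + b * (H (superlevel u b) - H [set i | b < u i]).
Proof.
move=> bs; rewrite /jump_sum (perm_big (rcons (undup s) b)) ?big_rcons //.
apply: uniq_perm; rewrite ?undup_uniq ?rcons_uniq ?mem_undup ?bs ?undup_uniq // => y.
by rewrite mem_undup !mem_rcons !in_cons mem_undup.
Qed.

Lemma level_sum_jump_sum H u c : H set0 = 0 -> sorted >=%R c -> value_closed u c ->
  level_sum H u c = jump_sum H u (undup c).
Proof.
move=> H0; elim/last_ind: c => [|c b IH] sc cl.
  by rewrite /level_sum /jump_sum big_ord0 big_nil.
case/lastP: c => [|c a] in IH sc cl *.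
  by rewrite level_sum1 /jump_sum /= big_seq1 strict_superlevel1 // H0 subr0.
rewrite level_sum_rcons2 IH ?(sorted_ge_belast sc) //; last exact: value_closed_belast sc cl.
have [<-|ab] := eqVneq a b.
  by rewrite subrr mulr0 addr0 [RHS]jump_sum_undup_rcons_mem // mem_rcons mem_head.
have ba : b < a.
  rewrite lt_neqAle eq_sym ab (sorted_ge_rcons sc) //.
  by rewrite mem_rcons in_cons mem_rcons mem_head orbT.
rewrite [RHS]jump_sum_undup_rcons ?(strict_superlevel_rcons sc cl ba) //.
apply: contra ab => /(sorted_ge_rcons (sorted_ge_belast sc)) ab.
by rewrite eq_le ab (ltW ba).
Qed.

Lemma jump_sum_values H u s : uniq s -> (forall i, u i \in s) ->
  jump_sum H u s = jump_sum H u (undup (codom u)).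
Proof.
move=> us su.
have drop_nonvalues r : jump_sum H u r = jump_sum H u [seq t <- r | t \in codom u].
  rewrite /jump_sum big_filter [RHS]big_mkcond; apply: eq_bigr => t _.
  case: ifP => // /negbT tu.
  suff -> : superlevel u t = [set i | t < u i] by rewrite subrr mulr0.
  apply/setP => i; rewrite !inE le_eqVlt; case: eqVneq => //= ti.
  by rewrite ti codom_f in tu.
rewrite drop_nonvalues [RHS]drop_nonvalues; apply: perm_big; apply: uniq_perm.
- exact: filter_uniq.
- by rewrite filter_uniq ?undup_uniq.
move=> t; rewrite !mem_filter mem_undup andbb.
by case: (boolP (t \in codom u)) => //= /codomP[i ->]; rewrite su.
Qed.

Lemma lovasz_level_sum H u c : H set0 = 0 -> sorted >=%R c -> (forall i, u i \in c) ->
  lovasz H u = level_sum H u c.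
Proof.
have closed d : (forall i, u i \in d) -> value_closed u d by move=> ud i b _ _.
move=> H0 sc uc; have cl_c := closed _ uc.
have cl_values := closed _ (mem_sorted_values u); rewrite lovasz_level_sum_values.
rewrite !level_sum_jump_sum ?sorted_values_sorted //.
by rewrite !jump_sum_values ?undup_uniq // => i; rewrite mem_undup ?mem_sorted_values.
Qed.
End LevelSums.

Lemma eq_lovasz {R : realDomainType} {T : finType} (F F' : {set T} -> R) (u : T -> R) :
  F =1 F' -> lovasz F u = lovasz F' u.
Proof. by move=> FF'; apply: eq_bigr => j _; rewrite FF'. Qed.

Section JoinSets.
Variables (V W : finType).
Implicit Types (S : {set V}) (T : {set W}).

Lemma mem_joinl S T v : (inl v \in joinset S T) = (v \in S).
Proof.
rewrite /joinset in_setU mem_imset; last by move=> a b [].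
by case: (v \in S) => //=; apply/negbTE/imsetP => -[w _].
Qed.

Lemma mem_joinr S T w : (inr w \in joinset S T) = (w \in T).
Proof.
rewrite /joinset in_setU mem_imset; last by move=> a b [].
by have -> : (@inr V W w \in inl @: S) = false by apply/negbTE/imsetP => -[v _].
Qed.

Lemma joinsetU S S' T T' : joinset S T :|: joinset S' T' = joinset (S :|: S') (T :|: T').
Proof. by apply/setP => -[v|w]; rewrite in_setU ?mem_joinl ?mem_joinr in_setU. Qed.

Lemma joinsetI S S' T T' : joinset S T :&: joinset S' T' = joinset (S :&: S') (T :&: T').
Proof. by apply/setP => -[v|w]; rewrite in_setI ?mem_joinl ?mem_joinr in_setI. Qed.

Lemma joinsetTT : joinset [set: V] [set: W] = setT.
Proof. by apply/setP => -[v|w]; rewrite ?mem_joinl ?mem_joinr !inE. Qed.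

Lemma joinset00 : joinset (set0 : {set V}) (set0 : {set W}) = set0.
Proof. by apply/setP => -[v|w]; rewrite ?mem_joinl ?mem_joinr !inE. Qed.

Lemma superlevel_joinvec (R : realDomainType) (x : V -> R) (xb : W -> R) t :
  superlevel (joinvec x xb) t = joinset (superlevel x t) (superlevel xb t).
Proof. by apply/setP => -[v|w]; rewrite ?mem_joinl ?mem_joinr !inE. Qed.
End JoinSets.

Section PartialMinimization.
Variables (R : realDomainType) (V W : finType) (G : {set V + W} -> R).
Implicit Types (S : {set V}) (T : {set W}).

Definition is_minimizer S T : bool := G (joinset S T) == minT G S.

Lemma minT_le S T : minT G S <= G (joinset S T).
Proof. by rewrite /minT (bigD1 T) //= ge_min lexx. Qed.

Lemma minT_exists S : exists T, is_minimizer S T.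
Proof.
suff [T E] : exists T, minT G S = G (joinset S T) by exists T; rewrite /is_minimizer E.
rewrite /minT; apply: (big_ind (fun m => exists T, m = G (joinset S T))) => [|a b|T _].
- by exists set0.
- by move=> [Ta ->] [Tb ->]; case: leP => _; [exists Ta | exists Tb].
- by exists T.
Qed.

Hypothesis G_ge0 : forall A, 0 <= G A.

Lemma minT_ge0 S : 0 <= minT G S.
Proof.
by rewrite /minT; apply: (big_ind (fun m => 0 <= m)) => // a b a0 b0; rewrite le_min a0 b0.
Qed.
Lemma minT_setT : G setT = 0 -> minT G setT = 0.
Proof.
by move=> GT; apply/le_anti; rewrite minT_ge0 andbT -GT -joinsetTT minT_le.
Qed.

Lemma minT_set0 : G set0 = 0 -> minT G set0 = 0.
Proof.
by move=> G0; apply/le_anti; rewrite minT_ge0 andbT -G0 -joinset00 minT_le.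
Qed.

Lemma partial_minE : G set0 = 0 -> partial_min G =1 minT G.
Proof. by move=> G0 S; rewrite /partial_min minT_set0 // subr0. Qed.
End PartialMinimization.

Section MinimizerSelection.
Variables (R : realDomainType) (V W : finType) (G : {set V + W} -> R).
Implicit Types (S : {set V}) (T : {set W}).

(* At [S = setT] we pick [setT], a minimizer because [G setT = 0], rather than
   the least minimizer: this keeps the selection monotone and makes the
   superlevel set of [xbar_opt] at [min_value x] agree with it. *)
Definition minimizer_sel S : {set W} :=
  if S == setT then setT
  else [arg min_(T < xchoose (minT_exists G S) | is_minimizer G S T) #|T|].

Hypotheses (G_sub : submodular G) (G_ge0 : forall A, 0 <= G A) (GT : G setT = 0).

Lemma is_minimizerI S S' A B : S \subset S' ->
  is_minimizer G S A -> is_minimizer G S' B -> is_minimizer G S (A :&: B).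
Proof.
move=> sS /eqP mA /eqP mB; rewrite /is_minimizer eq_le minT_le andbT.
have := G_sub (joinset S A) (joinset S' B).
rewrite joinsetU joinsetI (setUidPr sS) (setIidPl sS) mA mB.
have := minT_le G S' (A :|: B); lra.
Qed.

Lemma is_minimizer_sel S : is_minimizer G S (minimizer_sel S).
Proof.
rewrite /minimizer_sel; case: eqP => [->|_]; last by case: arg_minnP => //; exact: xchooseP.
by rewrite /is_minimizer joinsetTT GT minT_setT.
Qed.

Lemma minimizer_sel_least S T : S != setT -> is_minimizer G S T -> minimizer_sel S \subset T.
Proof.
move=> ST mT; have mI := is_minimizerI (subxx S) (is_minimizer_sel S) mT.
move: mI; rewrite /minimizer_sel (negbTE ST).
case: arg_minnP => [|A _ A_least mI]; first exact: xchooseP.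
by apply/setIidPl/eqP; rewrite eqEcard subsetIl A_least.
Qed.

Lemma minimizer_sel_mono S S' : S \subset S' -> minimizer_sel S \subset minimizer_sel S'.
Proof.
move=> sS; have [->|S'T] := eqVneq S' setT; first by rewrite /minimizer_sel eqxx subsetT.
have ST : S != setT by apply: contraNneq S'T => ST; rewrite eqEsubset subsetT -ST.
have mI := is_minimizerI sS (is_minimizer_sel S) (is_minimizer_sel S').
exact: subset_trans (minimizer_sel_least ST mI) (subsetIr _ _).
Qed.
End MinimizerSelection.

Definition min_value {R : realDomainType} {V : finType} (x : V -> R) : R :=
  \big[Num.min/0]_v x v.

Lemma min_value_le {R : realDomainType} {V : finType} (x : V -> R) v : min_value x <= x v.
Proof. by rewrite /min_value (bigD1 v) //= ge_min lexx. Qed.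

Section OptimalCompletion.
Variables (R : realDomainType) (V W : finType) (G : {set V + W} -> R) (x : V -> R).

Definition xbar_opt (w : W) : R :=
  \big[Num.max/min_value x]_(v | w \in minimizer_sel G (superlevel x (x v))) x v.

Lemma xbar_opt_ge_min w : min_value x <= xbar_opt w.
Proof.
rewrite /xbar_opt; apply: (big_ind (fun m => min_value x <= m)) => //.
- by move=> a b ha hb; rewrite le_max ha.
- by move=> v _; exact: min_value_le.
Qed.

Lemma xbar_opt_ge w v : w \in minimizer_sel G (superlevel x (x v)) -> x v <= xbar_opt w.
Proof. by move=> wv; rewrite /xbar_opt (bigD1 v) //= le_max lexx. Qed.

Lemma xbar_opt_cases w : xbar_opt w = min_value x \/
  exists2 v, w \in minimizer_sel G (superlevel x (x v)) & xbar_opt w = x v.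
Proof.
rewrite /xbar_opt; apply: (big_ind (fun m => m = min_value x \/
  exists2 v, w \in minimizer_sel G (superlevel x (x v)) & m = x v)) => [|a b|v wv].
- by left.
- by case: (leP a b).
- by right; exists v.
Qed.

Hypotheses (G_sub : submodular G) (G_ge0 : forall A, 0 <= G A) (GT : G setT = 0).

Lemma superlevel_xbar_opt t : (t = min_value x \/ exists v, t = x v) ->
  superlevel xbar_opt t = minimizer_sel G (superlevel x t).
Proof.
have superlevel_min t' : t' <= min_value x -> superlevel x t' = setT.
  by move=> le_t'; apply/setP => v; rewrite !inE (le_trans le_t' (min_value_le _ _)).
case=> [->|[v0 ->]].
  rewrite superlevel_min // /minimizer_sel eqxx.
  by apply/setP => w; rewrite !inE xbar_opt_ge_min.
apply/setP => w; rewrite inE; apply/idP/idP; last exact: xbar_opt_ge.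
case: (xbar_opt_cases w) => [->|[v wv ->] le_v0v].
  by move=> /superlevel_min ->; rewrite /minimizer_sel eqxx inE.
have : superlevel x (x v) \subset superlevel x (x v0).
  by apply/subsetP => i; rewrite !inE; exact: le_trans.
by move/(minimizer_sel_mono G_sub G_ge0 GT)/subsetP; apply.
Qed.
End OptimalCompletion.

Section LovaszPartialMin.
Variables (R : realDomainType) (V W : finType) (G : {set V + W} -> R).
Hypotheses (G_sub : submodular G) (G_ge0 : forall A, 0 <= G A) (GT : G setT = 0).
Variable x : V -> R.

Lemma level_sum_minT_le (xb : W -> R) c :
  sorted >=%R c -> (forall i, joinvec x xb i \in c) ->
  level_sum (minT G) x c <= level_sum G (joinvec x xb) c.
Proof.
move=> sc vals_c; apply: ler_sum => -[j /= jc] _.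
have [jc'|last_j] := ltnP j.+1 (size c).
  apply: ler_wpM2r; first by rewrite subr_ge0 sorted_ge_nth.
  by rewrite superlevel_joinvec minT_le.
have c_min i : c`_j <= joinvec x xb i.
  have /(nthP 0)[k kc <-] := vals_c i; rewrite sorted_ge_nth //.
  by rewrite -ltnS; exact: leq_trans kc last_j.
have -> : superlevel (joinvec x xb) c`_j = setT by apply/setP => i; rewrite !inE c_min.
have -> : superlevel x c`_j = setT by apply/setP => v; rewrite !inE (c_min (inl v)).
by rewrite GT minT_setT.
Qed.

Lemma level_sum_xbar_opt c : {subset c <= codom (joinvec x (xbar_opt G x))} ->
  level_sum G (joinvec x (xbar_opt G x)) c = level_sum (minT G) x c.
Proof.
move=> c_vals; apply: eq_bigr => -[j /= jc] _; congr (_ * _).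
have /c_vals/codomP[[v|w] /= ->] := mem_nth 0 jc.
  rewrite superlevel_joinvec superlevel_xbar_opt //; last by right; exists v.
  exact/eqP/is_minimizer_sel.
rewrite superlevel_joinvec superlevel_xbar_opt //; first exact/eqP/is_minimizer_sel.
by case: (xbar_opt_cases G x w) => [|[v _]]; [left | right; exists v].
Qed.
End LovaszPartialMin.

Theorem lemma4 (R : realFieldType) (V W : finType)
    (G : {set V + W} -> R)
    (Gsub : submodular G)
    (Gnonneg : forall A, 0 <= G A)
    (G0 : G set0 = 0)
    (GT : G setT = 0)
    (x : V -> R) :
  (exists xb : W -> R,
      lovasz G (joinvec x xb) = lovasz (partial_min G) x) /\
  (forall xb : W -> R, lovasz (partial_min G) x <= lovasz G (joinvec x xb)).
Proof.
have lovasz_partial_min (xb : W -> R) :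
    lovasz (partial_min G) x = level_sum (minT G) x (sorted_values (joinvec x xb)).
  rewrite (eq_lovasz _ (partial_minE Gnonneg G0)).
  apply: lovasz_level_sum (minT_set0 Gnonneg G0) (sorted_values_sorted _) _ => v.
  exact: (mem_sorted_values (joinvec x xb) (inl v)).
split.
  exists (xbar_opt G x); rewrite (lovasz_partial_min (xbar_opt G x)) lovasz_level_sum_values.
  by apply: level_sum_xbar_opt => // t /mapP[i _ ->]; exact: codom_f.
move=> xb; rewrite (lovasz_partial_min xb) lovasz_level_sum_values.
by apply: level_sum_minT_le => //; [exact: sorted_values_sorted | exact: mem_sorted_values].
Qed.
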